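(* Let $\mathcal{V}$ be a finite vocabulary, fix a decoding context $c$, and let $P(\cdot\mid c)$ be a probability distribution on $\mathcal{V}$ with $p_t := P(t\mid c) > 0$ for all $t \in \mathcal{V}$. Let $\mathcal{V}$ be partitioned into $n \ge 1$ buckets, and let the required bucket $B$ be drawn uniformly at random from the $n$ buckets. Let $t^\star$ denote the token of highest $P(\cdot\mid c)$-probability within the required bucket $B$ (so $t^\star$ is a random token determined by $B$). For each possible value of $t^\star$, let $Q(\cdot\mid c)$ be any probability distribution on $\mathcal{V}$ satisfying $Q(t^\star\mid c) \ge Q(t\mid c)$ for all $t \in \mathcal{V}$, and let $Z_{t^\star}$ be defined as in the context below. Then \[ \mathbb{E}_{t^\star}\bigl[D_{\mathrm{KL}}(Q(\cdot\mid c)\,\|\,P(\cdot\mid c))\bigr] \;\ge\; \frac{n-1}{n}\,\mathbb{E}_{t^\star}\bigl[\log(1/Z_{t^\star})\bigr], \] where $Z_{t^\star} = (k+1)r + \sum_{t \in \mathcal{U}} p_t$ and $r = \bigl(p_{t^\star}\prod_{t \in \mathcal{C}} p_t\bigr)^{1/(k+1)}$ is the geometric mean of the pooled probabilities.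
   Context: $D_{\mathrm{KL}}(Q\|P) = \sum_{t} Q(t)\log\frac{Q(t)}{P(t)}$ (natural logarithm). For a fixed token $t^\star$, let $Q^*$ be the distribution minimizing $D_{\mathrm{KL}}(Q\|P(\cdot\mid c))$ over all probability distributions $Q$ on $\mathcal{V}$ with $Q(t^\star) \ge Q(t)$ for all $t\in\mathcal{V}$ (i.e., $t^\star$ is an argmax of $Q$). The ''pooled'' set is $\mathcal{C} := \{t \neq t^\star : Q^*(t) = Q^*(t^\star)\}$, with $k := |\mathcal{C}|$, and the ''unpooled'' set is $\mathcal{U} := \{t \neq t^\star : Q^*(t) < Q^*(t^\star)\}$. The quantities $r$ and $Z_{t^\star}$ are computed from these sets for the given $t^\star$. The expectation $\mathbb{E}_{t^\star}$ is over the uniformly random required bucket. *)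

From HB Require Import structures.
From mathcomp Require Import all_boot all_order all_algebra.
From mathcomp Require Import reals exp.
Set Implicit Arguments. Unset Strict Implicit. Unset Printing Implicit Defensive.
Import Order.TTheory GRing.Theory Num.Theory.
Local Open Scope ring_scope.

Section KLDefs.
Variables (R : realType) (V : finType).

Definition is_dist (Q : V -> R) : Prop :=
  (forall t, 0 <= Q t) /\ \sum_(t : V) Q t = 1.

(* D_KL(Q || P) = sum_t Q(t) log (Q(t)/P(t)), natural log.
   Terms with Q t = 0 vanish since 0 * _ = 0 (convention 0 log 0 = 0). *)
Definition KL (Q P : V -> R) : R := \sum_(t : V) Q t * ln (Q t / P t).

Definition feasible (ts : V) (Q : V -> R) : Prop :=
  is_dist Q /\ (forall t, Q t <= Q ts).

Definition is_KL_proj (P : V -> R) (ts : V) (Qs : V -> R) : Prop :=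
  feasible ts Qs /\ (forall Q, feasible ts Q -> KL Qs P <= KL Q P).

Definition pooled (ts : V) (Qs : V -> R) : {set V} :=
  [set t | (t != ts) && (Qs t == Qs ts)].
Definition unpooled (ts : V) (Qs : V -> R) : {set V} :=
  [set t | (t != ts) && (Qs t < Qs ts)].

Definition geo_r (P : V -> R) (ts : V) (Qs : V -> R) : R :=
  (P ts * \prod_(t in pooled ts Qs) P t) `^ ((#|pooled ts Qs|.+1)%:R^-1).

Definition Zts (P : V -> R) (ts : V) (Qs : V -> R) : R :=
  (#|pooled ts Qs|.+1)%:R * geo_r P ts Qs + \sum_(t in unpooled ts Qs) P t.

End KLDefs.

Definition Eunif (R : realType) (n : nat) (f : 'I_n -> R) : R :=
  n%:R^-1 * \sum_(b < n) f b.

(* For the KL projection Q* onto the distributions with argmax t*, compare P with the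
   pooled reference distribution W, which puts mass r/Z on t* and on each pooled token
   and p_t/Z on each unpooled one.  Then
     KL(Q* || P) = KL(Q* || W) + sum_t Q*(t) ln (W(t)/p_t),
   and the cross term equals -ln Z: Q* is constant on {t*} u C, where the ln (r/p_t)
   average to zero because r is the geometric mean of these p_t.  Gibbs' inequality
   gives KL(Q* || W) >= 0, so ln (1/Z) <= KL(Q* || P) <= KL(Q || P) for every feasible Q.
   Averaging over the buckets, E KL >= max(0, E ln (1/Z)) >= (n-1)/n E ln (1/Z). *)
From HB Require Import structures.
From mathcomp Require Import all_boot all_order all_algebra.
From mathcomp Require Import reals exp.
From mathcomp Require Import ring lra.
Set Implicit Arguments. Unset Strict Implicit. Unset Printing Implicit Defensive.
Import Order.TTheory GRing.Theory Num.Theory.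
Local Open Scope ring_scope.

Section KLInequalities.
Variable R : realType.

Lemma ln_le_subr1 (x : R) : 0 < x -> ln x <= x - 1.
Proof.
move=> x_gt0; have := @le_ln1Dx R (x - 1).
by rewrite addrCA subrr addr0; apply; lra.
Qed.

Lemma ln_prod (I : Type) (r : seq I) (A : pred I) (F : I -> R) :
  (forall i, A i -> 0 < F i) ->
  ln (\prod_(i <- r | A i) F i) = \sum_(i <- r | A i) ln (F i).
Proof.
move=> F_gt0.
suff [] : 0 < \prod_(i <- r | A i) F i /\
          ln (\prod_(i <- r | A i) F i) = \sum_(i <- r | A i) ln (F i) by [].
apply: (big_ind2 (fun p s => 0 < p /\ ln p = s)) => [|x1 x2 y1 y2|i /F_gt0//].
- by rewrite ln1.
- move=> [x1_gt0 <-] [x2_gt0 <-].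
  by split; [exact: mulr_gt0 | rewrite lnM ?posrE].
Qed.

Variable V : finType.

Lemma KL_ge0 (Q W : V -> R) : is_dist Q -> (forall t, 0 < W t) ->
  \sum_t W t <= 1 -> 0 <= KL Q W.
Proof.
move=> [Q_ge0 sumQ] W_gt0 sumW.
have term_ge : forall t, Q t - W t <= Q t * ln (Q t / W t).
  move=> t; have [->|Qt_neq0] := eqVneq (Q t) 0.
    by rewrite mul0r sub0r oppr_le0 ltW.
  have Qt_gt0 : 0 < Q t by rewrite lt_def Qt_neq0 Q_ge0.
  rewrite -invf_div lnV ?posrE ?divr_gt0 // mulrN lerNr opprB.
  move: (ln_le_subr1 (divr_gt0 (W_gt0 t) Qt_gt0)).
  move=> /(ler_wpM2l (ltW Qt_gt0))/le_trans; apply.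
  by rewrite mulrBr mulr1 mulrCA mulfV ?gt_eqF // mulr1.
apply: le_trans (ler_sum _ (fun t _ => term_ge t)).
by rewrite sumrB sumQ subr_ge0.
Qed.

Lemma KL_chain (Q W P : V -> R) : (forall t, 0 <= Q t) ->
  (forall t, 0 < W t) -> (forall t, 0 < P t) ->
  KL Q P = KL Q W + \sum_t Q t * ln (W t / P t).
Proof.
move=> Q_ge0 W_gt0 P_gt0; rewrite /KL -big_split /=; apply: eq_bigr => t _.
have [->|Qt_neq0] := eqVneq (Q t) 0; first by rewrite !mul0r addr0.
have Qt_gt0 : 0 < Q t by rewrite lt_def Qt_neq0 Q_ge0.
by rewrite -mulrDr -lnM ?posrE ?divr_gt0 // mulrA divfK ?gt_eqF.
Qed.

End KLInequalities.

Section PooledReference.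
Variables (R : realType) (V : finType) (P : V -> R) (ts : V) (Qs : V -> R).
Hypotheses (P_gt0 : forall t, 0 < P t) (Qs_feasible : feasible ts Qs).

Local Notation C := (pooled ts Qs).
Local Notation U := (unpooled ts Qs).
Local Notation k := #|pooled ts Qs|.
Local Notation r := (geo_r P ts Qs).
Local Notation Z := (Zts P ts Qs).

Definition pooled_ref (t : V) : R := (if t \in ts |: C then r else P t) / Z.

Lemma ts_notin_pooled : ts \notin C.
Proof. by rewrite inE eqxx. Qed.

Lemma in_unpooled t : (t \in U) = (t \notin ts |: C).
Proof.
have [_ Qs_le] := Qs_feasible.
rewrite !inE; have [//|_] := eqVneq t ts.
by rewrite lt_def Qs_le andbT eq_sym.
Qed.

Lemma pooled_const t : t \in ts |: C -> Qs t = Qs ts.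
Proof. by rewrite !inE => /orP[/eqP->|/andP[_ /eqP]]. Qed.

Lemma geo_r_gt0 : 0 < r.
Proof. by rewrite powR_gt0 // mulr_gt0 // prodr_gt0. Qed.

Lemma ln_geo_r : ln r = k.+1%:R^-1 * (ln (P ts) + \sum_(t in C) ln (P t)).
Proof. by rewrite ln_powR lnM ?posrE ?prodr_gt0 // ln_prod. Qed.

Lemma Zts_gt0 : 0 < Z.
Proof. by rewrite ltr_wpDr ?sumr_ge0 ?mulr_gt0 ?geo_r_gt0 // => t _; rewrite ltW. Qed.

Lemma pooled_ref_gt0 t : 0 < pooled_ref t.
Proof. by rewrite divr_gt0 ?Zts_gt0 //; case: ifP => _; rewrite ?geo_r_gt0. Qed.

Lemma sum_pooled_ref : \sum_t pooled_ref t = 1.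
Proof.
rewrite -mulr_suml (bigID (mem (ts |: C))) /=.
rewrite (eq_bigr (fun _ => r)) => [|t ->//].
rewrite [X in _ + X](eq_bigr P) => [|t /negbTE ->//].
rewrite [X in _ + X](eq_bigl (mem U)) => [|t]; last by rewrite /= in_unpooled.
rewrite sumr_const -/(#|ts |: C|) cardsU1 ts_notin_pooled -mulr_natl.
by rewrite divff // gt_eqF // Zts_gt0.
Qed.

Lemma pooled_ref_cross : \sum_t Qs t * ln (pooled_ref t / P t) = - ln Z.
Proof.
have [[Qs_ge0 sumQs] _] := Qs_feasible.
have Z_gt0 := Zts_gt0; have r_gt0 := geo_r_gt0.
have term t : Qs t * ln (pooled_ref t / P t) =
    - Qs t * ln Z + (if t \in ts |: C then Qs ts * (ln r - ln (P t)) else 0).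
  rewrite /pooled_ref; case: ifP => [t_pooled|_].
    by rewrite pooled_const // !ln_div ?posrE ?divr_gt0 //; ring.
  by rewrite addr0 mulrAC divff ?gt_eqF // mul1r lnV ?posrE // mulrN mulNr.
rewrite (eq_bigr _ (fun t _ => term t)) big_split /= -mulr_suml sumrN sumQs.
rewrite -big_mkcond /= -mulr_sumr big_setU1 ?ts_notin_pooled //= sumrB sumr_const.
rewrite ln_geo_r -mulr_natr -[k.+1]addn1 natrD.
have k1_neq0 : (k%:R + 1%:R : R) != 0 by rewrite -natrD pnatr_eq0 addn1.
by field.
Qed.

Lemma lnVZts_le_KL : ln (1 / Z) <= KL Qs P.
Proof.
have [Qs_dist _] := Qs_feasible.
rewrite (KL_chain _ pooled_ref_gt0 P_gt0); last by case: Qs_dist.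
rewrite pooled_ref_cross mul1r lnV ?posrE ?Zts_gt0 // lerDr.
by apply: KL_ge0 => //; [exact: pooled_ref_gt0 | rewrite sum_pooled_ref].
Qed.

End PooledReference.

Lemma Eunif_scaled_le (R : realType) n (f g : 'I_n -> R) (c : R) :
  (forall b, 0 <= g b) -> (forall b, f b <= g b) -> 0 <= c <= 1 ->
  c * Eunif f <= Eunif g.
Proof.
move=> g_ge0 f_le_g /andP[c_ge0 c_le1].
have Eg_ge0 : 0 <= Eunif g.
  by rewrite /Eunif mulr_ge0 ?invr_ge0 // sumr_ge0.
have Ef_le : Eunif f <= Eunif g.
  by rewrite /Eunif ler_wpM2l ?invr_ge0 // ler_sum.
have [Ef_ge0|Ef_lt0] := leP 0 (Eunif f).
  exact: le_trans (ler_piMl Ef_ge0 c_le1) Ef_le.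
exact: le_trans (mulr_ge0_le0 c_ge0 (ltW Ef_lt0)) Eg_ge0.
Qed.

Lemma subn1_div_itv (R : realType) n : 0 <= (n%:R - 1) / (n%:R : R) <= 1.
Proof.
case: n => [|n]; first by rewrite invr0 mulr0 lexx ler01.
rewrite divr_ge0 ?subr_ge0 ?ler1n //= ler_pdivrMr ?ltr0Sn //; lra.
Qed.

Theorem theorem7p1 (R : realType) (V : finType) (P : V -> R) (n : nat)
    (bucket : V -> 'I_n) (tstar : 'I_n -> V)
    (Q : V -> V -> R) (Qs : V -> V -> R) :
  is_dist P ->
  (forall t, 0 < P t) ->
  (0 < n)%N ->
  (* tstar b is a token of highest P-probability in bucket b *)
  (forall b, bucket (tstar b) = b) ->
  (forall b t, bucket t = b -> P t <= P (tstar b)) ->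
  (* for each possible value ts of t*, Q ts is a distribution with ts as argmax *)
  (forall ts, feasible ts (Q ts)) ->
  (* Qs ts is the KL-minimizer Q* for ts *)
  (forall ts, is_KL_proj P ts (Qs ts)) ->
  Eunif (fun b => KL (Q (tstar b)) P) >=
    (n%:R - 1) / n%:R * Eunif (fun b => ln (1 / Zts P (tstar b) (Qs (tstar b)))).
Proof.
(* The bound holds for each value of t* separately, so the bucket hypotheses are not
   needed; neither is n > 0, as (0 - 1) / 0 = 0 in a field. *)
move=> [_ sumP] P_gt0 _ _ _ Q_feasible Qs_proj.
apply: Eunif_scaled_le (subn1_div_itv _ _) => b.
- have [Q_dist _] := Q_feasible (tstar b).
  by apply: KL_ge0 => //; rewrite sumP.
- have [Qs_feasible Qs_min] := Qs_proj (tstar b).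
  exact: le_trans (lnVZts_le_KL P_gt0 Qs_feasible) (Qs_min _ (Q_feasible _)).
Qed.
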